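(* Let $d\ge1$ be an integer, and let $Q_1,\dots,Q_\ell$ be a sequence of subsets of $V$, each of size $1$ or $2$. For every offline vertex $i$, $$\mu^i(Q_1,Q_2,\dots,Q_\ell)=\mu^i(Q_\ell,Q_{\ell-1},\dots,Q_1).$$ Here $\mu^i(R_1,\dots,R_k)$ denotes the expected number of rounds in which $i$ is matched when Algorithm 1 is run on the proposal sequence $R_1,\dots,R_k$.
   Context: Online correlated rental setting: there is a finite set $V$ of offline vertices and an integer $d\ge1$. A sequence of proposals (subsets of $V$ of size $1$ or $2$) is fixed in advance and revealed one per round; at each round the algorithm selects one vertex of the current proposal. An offline vertex $i$ is matched at round $j$ if it is selected at round $j$ and was not matched at any round $t$ with $j-d<t<j$. Algorithm 1: it keeps a state $\tau_{i,t}\in\{\mathrm{sel},\mathrm{nsel},\mathrm{unk}\}$ for every $i$ and round $t$, initially all $\mathrm{unk}$. All random draws are fresh and independent. ''Reset $i$'' at round $j$ means setting $\tau_{i,t}=\mathrm{unk}$ for all $t\in[j+1,j+d-1]$. (1) If the proposal at round $j$ is $\{i_1\}$: reset $i_1$ and select $i_1$. (2) If the proposal is $\{i_1,i_2\}$: with probability $1/2$ the round is a sender, and otherwise it is a receiver. - Sender: draw $\ell,m\in\{1,2\}$ independently and uniformly. Reset $i_{3-m}$. Set $\tau_{i_m,t}=\mathrm{sel}$ for all $t\in[j+1,j+d-1]$ if $\ell=m$, and $\mathrm{nsel}$ otherwise. Select $i_\ell$. - Receiver: draw $m\in\{1,2\}$ uniformly. If $\tau_{i_m,j}=\mathrm{sel}$,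 let $\ell=3-m$; if $\tau_{i_m,j}=\mathrm{nsel}$, let $\ell=m$; otherwise draw $\ell$ uniformly from $\{1,2\}$. Reset $i_1,i_2$. Select $i_\ell$. *)

(* Exact (rational) expectation of the number of matches of
   an offline vertex under Algorithm 1, computed by summing over all random
   branches with their probabilities. *)
From mathcomp Require Import all_boot all_order all_algebra.
Set Implicit Arguments. Unset Strict Implicit. Unset Printing Implicit Defensive.
Import Order.TTheory GRing.Theory Num.Theory.
Local Open Scope ring_scope.

Inductive tau_state := Sel | NSel | Unk.

Section Alg.
Variables (V : finType) (d : nat).

Record alg_state := AlgState {
  tau_of : V -> nat -> tau_state;
  last_match : V -> option nat }.

Definition init_state : alg_state := AlgState (fun _ _ => Unk) (fun _ => None).

Definition in_window (j t : nat) : bool := (j.+1 <= t)%N && (t <= j + d - 1)%N.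

Definition set_window (v : V) (j : nat) (x : tau_state) (s : alg_state) :=
  AlgState (fun u t => if (u == v) && in_window j t then x else tau_of s u t)
           (last_match s).

Definition reset (v : V) (j : nat) (s : alg_state) := set_window v j Unk s.

Definition select (v : V) (j : nat) (s : alg_state) : bool * alg_state :=
  let matched := if last_match s v is Some t then (t + d <= j)%N else true in
  (matched,
   if matched then
     AlgState (tau_of s) (fun u => if u == v then Some j else last_match s u)
   else s).

Fixpoint mu_aux (i : V) (j : nat) (s : alg_state) (Qs : seq {set V}) : rat :=
  match Qs with
  | [::] => 0
  | Q :: Qs' =>
    let cont (v : V) (s1 : alg_state) : rat :=
      let (g, s2) := select v j s1 in
      (if g && (v == i) then 1 else 0) + mu_aux i j.+1 s2 Qs' in
    match enum Q with
    | [:: a] => cont a (reset a j s)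
    | [:: a; b] =>
      let pick (k : bool) := if k then b else a in  (* false ~ 1, true ~ 2 *)
      let sender :=
        \sum_(l : bool) \sum_(m : bool)
          (1 / 4%:R) * cont (pick l)
             (set_window (pick m) j (if l == m then Sel else NSel)
                (reset (pick (~~ m)) j s)) in
      let receiver :=
        \sum_(m : bool)
          (1 / 2%:R) *
          (let s' := reset a j (reset b j s) in
           match tau_of s (pick m) j with
           | Sel => cont (pick (~~ m)) s'
           | NSel => cont (pick m) s'
           | Unk => \sum_(l : bool) (1 / 2%:R) * cont (pick l) s'
           end) in
      (1 / 2%:R) * sender + (1 / 2%:R) * receiver
    | _ => 0
    end
  end.

(* mu^i(Q_1, ..., Q_l): rounds numbered from 1 *)
Definition mu (i : V) (Qs : seq {set V}) : rat := mu_aux i 1 init_state Qs.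

End Alg.

From mathcomp Require Import all_boot all_order all_algebra.
From mathcomp Require Import zify lra.
Set Implicit Arguments. Unset Strict Implicit. Unset Printing Implicit Defensive.
Import Order.TTheory GRing.Theory Num.Theory.

(* Make the coins explicit: every round draws (sender?, m, l) uniformly among 8
   outcomes, so mu is an average over coin sequences, and the number of matches
   of i is the greedy count of the rounds selecting i that are d apart, a count
   invariant under reversal. In a receiver round the selected vertex depends on
   the past only through a link to the last sender round that proposed its vertex
   i_m fewer than d rounds earlier, with no proposal of i_m in between. Links are
   preserved by time reversal with the roles of sender and receiver swapped, so
   reversing the coin sequence, swapping the roles and adjusting the l draws is a
   bijection of coin sequences under which the selected vertices come out in
   reverse order. *)

Section GreedyMatches.
Variable d : nat.

(* Matches of a vertex selected in the rounds marked [true] in [bs], when it is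
   still blocked during the first [c] of these rounds. *)
Fixpoint greedy_matches (c : nat) (bs : seq bool) : nat :=
  match bs with
  | [::] => 0
  | b :: bs' => if (c == 0) && b then (greedy_matches d.-1 bs').+1
                else greedy_matches c.-1 bs'
  end.

Lemma greedy_matches_drop c bs : greedy_matches c bs = greedy_matches 0 (drop c bs).
Proof. by elim: bs c => [|b bs IH] [|c] //=; rewrite drop0. Qed.

Lemma greedy_matches_nseq_false c k : greedy_matches c (nseq k false) = 0.
Proof. by elim: k c => [|k IH] c //=; rewrite andbF. Qed.

Lemma greedy_matches_cat_nseq_false c bs k :
  greedy_matches c (bs ++ nseq k false) = greedy_matches c bs.
Proof.
elim: bs c => [|b bs IH] c /=; first exact: greedy_matches_nseq_false.
by case: ifP; rewrite IH.
Qed.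

Lemma greedy_matches_nseq_false_cat k bs :
  greedy_matches 0 (nseq k false ++ bs) = greedy_matches 0 bs.
Proof. by elim: k => [|k IH] //=; rewrite andbF. Qed.

Lemma greedy_matches_rcons_true c bs : c <= size bs ->
  greedy_matches c (rcons bs true) = (greedy_matches c (take (size bs - d.-1) bs)).+1.
Proof.
elim: bs c => [|b bs IH] c /=; first by rewrite leqn0 => /eqP ->.
move=> le_c_bs; case: (posnP ((size bs).+1 - d.-1)) => [fits|].
  rewrite fits take0 /=; case: ifP => _.
    by rewrite greedy_matches_drop drop_oversize // size_rcons; lia.
  rewrite IH; last by case: c le_c_bs.
  have -> : size bs - d.-1 = 0 by lia.
  by rewrite take0.
move=> ?; have -> : (size bs).+1 - d.-1 = (size bs - d.-1).+1 by lia.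
by rewrite /=; case: ifP => _; rewrite IH //; [lia | case: c le_c_bs].
Qed.

(* Induction on the first selected round: it is matched and blocks the d-1 rounds
   after it; in the reversed pattern it is the last selected round, and it is
   matched after the d-1 rounds before it have been ignored. *)
Lemma greedy_matches_rev bs : greedy_matches 0 (rev bs) = greedy_matches 0 bs.
Proof.
move: {2}(size bs) (leqnn (size bs)) => N.
elim: N bs => [|N IH] bs le_bs_N.
  by move: le_bs_N; rewrite leqn0 => /nilP ->.
have [has_true|] := boolP (true \in bs); last first.
  move=> no_true; have -> : bs = nseq (size bs) false.
    by apply/all_pred1P/allP => -[] // has_t; rewrite has_t in no_true.
  by rewrite rev_nseq !greedy_matches_nseq_false.
set p := index true bs.
have lt_p_bs : p < size bs by rewrite index_mem.
have Hbs : bs = nseq p false ++ true :: drop p.+1 bs.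
  rewrite -[bs in LHS](cat_take_drop p) (drop_nth false lt_p_bs) nth_index //.
  congr (_ ++ _); apply: (@eq_from_nth _ false); rewrite ?size_nseq ?size_take ?lt_p_bs //.
  move=> k lt_k_p; rewrite nth_nseq lt_k_p nth_take //.
  by apply/negP => nth_true; have := before_find false lt_k_p; rewrite /p /index nth_true.
set y := drop p.+1 bs in Hbs.
have size_y : size y <= N by move: le_bs_N; rewrite Hbs size_cat size_nseq /=; lia.
rewrite Hbs greedy_matches_nseq_false_cat rev_cat rev_nseq rev_cons.
rewrite greedy_matches_cat_nseq_false greedy_matches_rcons_true // size_rev -rev_drop /=.
by rewrite IH -?greedy_matches_drop // size_drop; lia.
Qed.

End GreedyMatches.

Lemma mkseq_cons (T : Type) (f : nat -> T) n :
  mkseq f n.+1 = f 0 :: mkseq (fun k => f k.+1) n.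
Proof. by rewrite /mkseq /= (iotaDl 1 0) -map_comp. Qed.

Lemma big_tuple_cons (R : nmodType) (T : finType) n (F : n.+1.-tuple T -> R) :
  (\sum_(t : n.+1.-tuple T) F t = \sum_(x : T) \sum_(t : n.-tuple T) F [tuple of x :: t])%R.
Proof.
rewrite pair_big /= (reindex (fun p : T * n.-tuple T => [tuple of p.1 :: p.2])) //=.
exists (fun t : n.+1.-tuple T => (thead t, [tuple of behead t])) => [[x t] _|t _] /=.
  by rewrite theadE; congr pair; apply: val_inj.
by rewrite -tuple_eta.
Qed.

(* The coins of a round: whether it is a sender round, and the draws m and l,
   with [false] standing for 1 and [true] for 2. *)
Definition coin := (bool * bool * bool)%type.
Definition coin0 : coin := (false, false, false).
Definition is_sender (c : coin) := c.1.1.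
Definition draw_m (c : coin) := c.1.2.
Definition draw_l (c : coin) := c.2.

Definition expect n (f : n.-tuple coin -> rat) : rat :=
  ((1 / 8%:R) ^+ n * \sum_(t : n.-tuple coin) f t)%R.

Lemma eq_expect n (f g : n.-tuple coin -> rat) : f =1 g -> expect f = expect g.
Proof. by move=> fg; rewrite /expect; congr (_ * _)%R; apply: eq_bigr => t _. Qed.

Lemma expect_inj n (h : n.-tuple coin -> n.-tuple coin) (f : n.-tuple coin -> rat) :
  injective h -> expect (fun t => f (h t)) = expect f.
Proof. by move=> inj_h; rewrite /expect [in RHS](reindex_inj inj_h). Qed.

Lemma sum_coin (F : coin -> rat) :
  (\sum_(c : coin) F c = \sum_(sr : bool) \sum_(m : bool) \sum_(l : bool) F (sr, m, l))%R.
Proof.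
rewrite (eq_bigr (fun c => F (c.1.1, c.1.2, c.2))) => [|[[]]] //.
rewrite -(pair_bigA _ (fun (p : bool * bool) (l : bool) => F (p.1, p.2, l))) /=.
by rewrite -(pair_bigA _ (fun sr m : bool => \sum_(l : bool) F (sr, m, l))%R).
Qed.

Lemma expect_cons n (f : n.+1.-tuple coin -> rat) :
  expect f = (1 / 8%:R * \sum_(sr : bool) \sum_(m : bool) \sum_(l : bool)
               expect (fun t : n.-tuple coin => f [tuple of (sr, m, l) :: t]))%R.
Proof.
rewrite /expect big_tuple_cons exprS -mulrA sum_coin; congr (_ * _)%R.
by rewrite mulr_sumr; apply: eq_bigr => sr _; rewrite mulr_sumr; apply: eq_bigr => m _;
   rewrite mulr_sumr.
Qed.

Lemma expect_addl n (a : rat) (f : n.-tuple coin -> rat) :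
  expect (fun t => a + f t)%R = (a + expect f)%R.
Proof.
rewrite /expect big_split /= mulrDr sumr_const card_tuple; congr (_ + _)%R.
have -> : #|{: coin}| = 8 by rewrite !card_prod card_bool.
by rewrite -(mulr_natl a (8 ^ n)) mulrA natrX -exprMn div1r mulVf // expr1n mul1r.
Qed.

Section Proposals.
Variables (V : finType) (x0 : V).

Definition is_proposal (Q : {set V}) := (#|Q| == 1)%N || (#|Q| == 2)%N.
Definition is_pair (Q : {set V}) := size (enum Q) == 2.

Definition member (Q : {set V}) (b : bool) : V := nth x0 (enum Q) b.

Lemma enum_single (Q : {set V}) : is_proposal Q -> ~~ is_pair Q -> enum Q = [:: member Q false].
Proof. by rewrite /is_proposal /is_pair /member !cardE; case: (enum Q) => [|a [|b [|? ?]]]. Qed.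

Lemma enum_pair (Q : {set V}) : is_pair Q -> enum Q = [:: member Q false; member Q true].
Proof. by rewrite /is_pair /member; case: (enum Q) => [|a [|b [|? ?]]]. Qed.

Lemma member_in (Q : {set V}) b : is_pair Q -> member Q b \in Q.
Proof. by move=> /enum_pair eQ; rewrite -mem_enum eQ; case: b; rewrite !inE eqxx ?orbT. Qed.

Lemma member_inj (Q : {set V}) : is_pair Q -> injective (member Q).
Proof.
move=> /enum_pair eQ; have := enum_uniq (pred_of_set Q); rewrite eQ /= inE andbT => neq.
by move=> [] [] // eq_lm; rewrite eq_lm eqxx in neq.
Qed.

Lemma mem_pair (Q : {set V}) x m : is_pair Q ->
  (x \in Q) = (x == member Q m) || (x == member Q (~~ m)).
Proof. by move=> /enum_pair eQ; rewrite -mem_enum eQ !inE; case: m; rewrite // orbC. Qed.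

End Proposals.

Section Run.
Variables (V : finType) (d : nat) (x0 : V).

(* The vertex selected in round [j] on proposal [Q] with coins [c], together with
   the state after the resets of the round (i.e. just before the selection). *)
Definition alg_round (j : nat) (s : alg_state V) (Q : {set V}) (c : coin) : V * alg_state V :=
  let pick := member x0 Q in
  let: (sr, m, l) := c in
  if ~~ is_pair Q then (pick false, reset d (pick false) j s)
  else if sr then
    (pick l, set_window d (pick m) j (if l == m then Sel else NSel) (reset d (pick (~~ m)) j s))
  else
    (match tau_of s (pick m) j with Sel => pick (~~ m) | NSel => pick m | Unk => pick l end,
     reset d (pick false) j (reset d (pick true) j s)).

Fixpoint run_state (Qs : seq {set V}) (cs : seq coin) (j0 : nat) (s0 : alg_state V)
    (k : nat) : alg_state V :=
  if k is k'.+1 then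
    let r := alg_round (j0 + k') (run_state Qs cs j0 s0 k') (nth set0 Qs k') (nth coin0 cs k') in
    (select d r.1 (j0 + k') r.2).2
  else s0.

Definition run_sel Qs cs j0 s0 k :=
  (alg_round (j0 + k) (run_state Qs cs j0 s0 k) (nth set0 Qs k) (nth coin0 cs k)).1.

Lemma run_state_cons Q Qs c cs j0 s0 k :
  run_state (Q :: Qs) (c :: cs) j0 s0 k.+1 =
  run_state Qs cs j0.+1 (run_state (Q :: Qs) (c :: cs) j0 s0 1) k.
Proof. by elim: k => [|k /= ->] //; rewrite addSnnS. Qed.

Lemma run_state1 Q Qs c cs j0 s0 :
  run_state (Q :: Qs) (c :: cs) j0 s0 1 =
  (select d (alg_round j0 s0 Q c).1 j0 (alg_round j0 s0 Q c).2).2.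
Proof. by rewrite /= addn0. Qed.

Lemma run_sel_cons Q Qs c cs j0 s0 k :
  run_sel (Q :: Qs) (c :: cs) j0 s0 k.+1 =
  run_sel Qs cs j0.+1 (run_state (Q :: Qs) (c :: cs) j0 s0 1) k.
Proof. by rewrite /run_sel run_state_cons addSnnS. Qed.

Lemma last_match_alg_round j s Q c : last_match (alg_round j s Q c).2 = last_match s.
Proof. by case: c => [[[] m] l]; rewrite /alg_round; case: is_pair. Qed.

Definition round_mark (Q : {set V}) (c : coin) (v x : V) : tau_state :=
  if [&& is_pair Q, is_sender c & member x0 Q (draw_m c) == x]
  then (if v == x then Sel else NSel) else Unk.

Lemma tau_alg_round j s (Q : {set V}) c x t : is_proposal Q ->
  tau_of (alg_round j s Q c).2 x t =
  if (x \in Q) && in_window d j t then round_mark Q c (alg_round j s Q c).1 x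
  else tau_of s x t.
Proof.
move=> Q_ok; case: c => [[sr m] l]; rewrite /round_mark /alg_round /=.
case: (boolP (is_pair Q)) => [Q2|Q1] /=; last first.
  by rewrite -mem_enum (enum_single x0) // inE; case: (x == _).
rewrite (mem_pair x0 x m Q2); case: sr => /=.
  rewrite /draw_m /=; case: (eqVneq x (member x0 Q m)) => [->|_] //=.
  by case: (in_window d j t); rewrite ?andbF ?(inj_eq (member_inj Q2)).
by case: m => /=; case: (x == member x0 Q false); case: (x == member x0 Q true);
  case: (in_window d j t).
Qed.

Lemma tau_select v j (s : alg_state V) : tau_of (select d v j s).2 = tau_of s.
Proof. by rewrite /select; case: ifP. Qed.

(* Number of further rounds during which a vertex last matched at [lm] stays
   blocked, seen from round [j]. *)
Definition cooldown (j : nat) (lm : option nat) := if lm is Some t then t + d - j else 0.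

Variable i : V.

Definition run_matches n Qs (cs : seq coin) j s : nat :=
  greedy_matches d (cooldown j (last_match s i)) (map (pred1 i) (mkseq (run_sel Qs cs j s) n)).

Lemma greedy_matches_select s v j bs : 0 < d ->
  greedy_matches d (cooldown j (last_match s i)) ((v == i) :: bs) =
  ((select d v j s).1 && (v == i)) +
  greedy_matches d (cooldown j.+1 (last_match (select d v j s).2 i)) bs.
Proof.
move=> d_gt0; rewrite /select /cooldown /=.
case: (eqVneq v i) => [<-|neq_vi] /=; last first.
  rewrite !andbF /=.
  case: (match last_match s v with Some t => (t + d <= j)%N | None => true end) => /=;
  rewrite ?[i == v]eq_sym ?(negbTE neq_vi);
  by case: (last_match s i) => [t|] //=; congr greedy_matches; lia.
rewrite !andbT.
case Hlm: (last_match s v) => [t|] /=; last first.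
  by rewrite add1n eqxx; congr (_.+1); congr greedy_matches; lia.
case: (leqP (t + d) j) => [free|blocked] /=.
  rewrite ifT; last by apply/eqP; lia.
  by rewrite add1n eqxx; congr (_.+1); congr greedy_matches; lia.
rewrite ifF; last by apply/eqP; lia.
by rewrite Hlm add0n; congr greedy_matches; lia.
Qed.

Definition branch_value j s Q Qs c : rat :=
  let r := alg_round j s Q c in
  let (g, s') := select d r.1 j r.2 in
  ((if g && (r.1 == i) then 1 else 0) + mu_aux d i j.+1 s' Qs)%R.

Lemma mu_aux_cons j s Q Qs : is_proposal Q ->
  mu_aux d i j s (Q :: Qs) =
  (1 / 8%:R * \sum_(sr : bool) \sum_(m : bool) \sum_(l : bool) branch_value j s Q Qs (sr, m, l))%R.
Proof.
rewrite /is_proposal !cardE /branch_value /alg_round /is_pair /member /=.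
case: (enum Q) => [|a [|b [|? ?]]] //= _; rewrite !big_bool /=; first lra.
by case: (tau_of s a j); case: (tau_of s b j) => /=; lra.
Qed.

Lemma expect_run_matches_cons j s Q Qs n c : 0 < d ->
  (forall j s, mu_aux d i j s Qs =
               expect (fun t : n.-tuple coin => (run_matches n Qs t j s)%:R%R)) ->
  expect (fun t : n.-tuple coin => (run_matches n.+1 (Q :: Qs) [tuple of c :: t] j s)%:R%R)
  = branch_value j s Q Qs c.
Proof.
move=> d_gt0 IH; rewrite /branch_value.
set v := (alg_round j s Q c).1; set s1 := (alg_round j s Q c).2.
case Esel: (select d v j s1) => [g s2].
rewrite IH -expect_addl; apply: eq_expect => t.
rewrite /run_matches mkseq_cons map_cons.
have -> : run_sel (Q :: Qs) (c :: t) j s 0 = v by rewrite /run_sel /= addn0.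
have -> : mkseq (fun k => run_sel (Q :: Qs) (c :: t) j s k.+1) n = mkseq (run_sel Qs t j.+1 s2) n.
  by apply: eq_mkseq => k; rewrite run_sel_cons run_state1 -/v -/s1 Esel.
rewrite -(last_match_alg_round j s Q c) -/s1 (greedy_matches_select _ _ _ _ d_gt0) Esel /= natrD.
by case: (g && (v == i)).
Qed.

Lemma mu_aux_expect Qs n j s : 0 < d -> size Qs = n -> all (@is_proposal V) Qs ->
  mu_aux d i j s Qs = expect (fun t : n.-tuple coin => (run_matches n Qs t j s)%:R%R).
Proof.
move=> d_gt0; elim: Qs n j s => [|Q Qs IH] n j s <-; first by rewrite /expect big1 ?mulr0.
case/andP=> Q_ok Qs_ok; rewrite mu_aux_cons // expect_cons; congr (_ * _)%R.
apply: eq_bigr => sr _; apply: eq_bigr => m _; apply: eq_bigr => l _.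
by rewrite expect_run_matches_cons // => j' s'; apply: IH.
Qed.

End Run.

Section Links.
Variables (V : finType) (d : nat) (x0 : V).
Variables (Qs : seq {set V}) (cs : seq coin).

Local Notation Qn k := (nth set0 Qs k).
Local Notation cn k := (nth coin0 cs k).

Fixpoint last_occ (x : V) (k : nat) : option nat :=
  if k is k'.+1 then (if x \in Qn k' then Some k' else last_occ x k') else None.

(* [recv_link k = Some p] when round [k] is a receiver round whose vertex i_m
   still sees the window written by the sender round [p]. *)
Definition recv_link (k : nat) : option nat :=
  if is_pair (Qn k) && ~~ is_sender (cn k) then
    if last_occ (member x0 (Qn k) (draw_m (cn k))) k is Some p then
      if [&& k < p + d, is_pair (Qn p), is_sender (cn p)
           & member x0 (Qn p) (draw_m (cn p)) == member x0 (Qn k) (draw_m (cn k))]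
      then Some p else None
    else None
  else None.

Definition sel_rule (sg : nat -> V) (k : nat) : V :=
  let m := draw_m (cn k) in
  if is_pair (Qn k) then
    if is_sender (cn k) then member x0 (Qn k) (draw_l (cn k))
    else if recv_link k is Some p then
      (if sg p == member x0 (Qn k) m then member x0 (Qn k) (~~ m) else member x0 (Qn k) m)
    else member x0 (Qn k) (draw_l (cn k))
  else member x0 (Qn k) false.

Lemma last_occP x k p : last_occ x k = Some p <->
  [/\ p < k, x \in Qn p & forall q, p < q -> q < k -> x \notin Qn q].
Proof.
elim: k => [|k IH] /=; first by split=> // -[].
case: ifP => x_k.
  split=> [[<-]|[lt_pk x_p no_x]]; first by split=> // q; lia.
  case: (ltngtP p k) => [lt_pk'|lt_kp|-> //]; last lia.
  by move: (no_x k lt_pk' (ltnSn k)); rewrite x_k.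
rewrite IH; split=> -[lt_pk x_p no_x].
  split=> [|//|q lt_pq]; first exact: ltnW.
  by rewrite ltnS leq_eqVlt => /orP[/eqP->|]; [rewrite x_k | exact: no_x].
split=> [|//|q lt_pq lt_qk]; last by apply: no_x => //; exact: ltnW.
case: (ltngtP p k) lt_pk => [//|lt_kp|eq_pk]; first lia.
by rewrite eq_pk x_k in x_p.
Qed.

Lemma last_occ_lt x k p : last_occ x k = Some p -> p < k.
Proof. by case/last_occP. Qed.

Section Invariant.
Variables (j0 : nat) (s0 : alg_state V).
Hypothesis d_gt0 : 0 < d.
Hypothesis s0_unk : forall x t, j0 <= t -> tau_of s0 x t = Unk.
Hypothesis Qs_ok : all (@is_proposal V) Qs.

Local Notation sg := (run_sel d x0 Qs cs j0 s0).

(* The window values that rounds [0 .. k-1] leave behind: only the last round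
   proposing [x] matters, since every proposal of [x] resets its window. *)
Definition tau_pred k x t :=
  if last_occ x k is Some p then
    if t <= j0 + p + d.-1 then round_mark x0 (Qn p) (cn p) (sg p) x else Unk
  else Unk.

Lemma tau_pred_far k x t : j0 + k + d.-1 < t -> tau_pred k x t = Unk.
Proof.
rewrite /tau_pred; case Hp: (last_occ x k) => [p|] // far.
by rewrite ifF //; apply/negbTE; rewrite -ltnNge; have := last_occ_lt Hp; lia.
Qed.

Lemma tau_predS k x t : tau_pred k.+1 x t =
  if x \in Qn k then
    (if t <= j0 + k + d.-1 then round_mark x0 (Qn k) (cn k) (sg k) x else Unk)
  else tau_pred k x t.
Proof. by rewrite /tau_pred /=; case: ifP. Qed.

Lemma run_tau k x t : k <= size Qs -> j0 + k <= t ->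
  tau_of (run_state d x0 Qs cs j0 s0 k) x t = tau_pred k x t.
Proof.
elim: k t => [|k IH] t le_k le_t; first by rewrite /tau_pred /= s0_unk // -(addn0 j0).
have Qk_ok : is_proposal (Qn k) by apply: (allP Qs_ok); apply: mem_nth.
have in_window_E : in_window d (j0 + k) t = (t <= j0 + k + d.-1).
  by rewrite /in_window; apply/idP/idP; lia.
rewrite /= tau_select tau_alg_round // tau_predS /run_sel in_window_E.
have IHk : tau_of (run_state d x0 Qs cs j0 s0 k) x t = tau_pred k x t by apply: IH; lia.
case: (x \in Qn k) => //=; case: leqP => // far.
by rewrite IHk tau_pred_far.
Qed.

Lemma run_sel_rule k : k < size Qs -> sg k = sel_rule sg k.
Proof.
move=> lt_k; rewrite {1}/run_sel /sel_rule /alg_round.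
case Ec: (cn k) => [[sr m] l] /=; case Qk2: (is_pair (Qn k)) => //=; case: sr Ec => // Ec.
rewrite run_tau ?(ltnW lt_k) // /tau_pred /recv_link Qk2 Ec /=.
case: (last_occ (member x0 (Qn k) m) k) => [p|] //.
have -> : (j0 + k <= j0 + p + d.-1) = (k < p + d) by apply/idP/idP; lia.
rewrite /round_mark; case: (k < p + d) => //=.
by case: [&& _, _ & _] => //; case: ifP.
Qed.

End Invariant.


Definition linked p k :=
  [/\ p < k, k < p + d, is_pair (Qn p) & is_pair (Qn k)] /\
  [/\ is_sender (cn p), ~~ is_sender (cn k),
      member x0 (Qn p) (draw_m (cn p)) = member x0 (Qn k) (draw_m (cn k)) &
      forall q, p < q -> q < k -> member x0 (Qn k) (draw_m (cn k)) \notin Qn q].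

Lemma recv_linkP k p : recv_link k = Some p <-> linked p k.
Proof.
rewrite /recv_link; split.
  case: ifP => // /andP[k2 k_recv].
  case Hp: last_occ => [p'|] //; case: ifP => // /and4P[lt_kp p2 p_send /eqP same] [<-].
  by move: Hp => /last_occP[lt_pk _ no_x]; split; split.
move=> [[lt_pk lt_kp p2 k2] [p_send k_recv same no_x]].
rewrite k2 k_recv; have -> : last_occ (member x0 (Qn k) (draw_m (cn k))) k = Some p.
  by apply/last_occP; split=> //; rewrite -same member_in.
by rewrite lt_kp p2 p_send same eqxx.
Qed.

Lemma recv_link_lt k p : recv_link k = Some p -> p < k.
Proof. by move/recv_linkP => [[]]. Qed.

(* A sender round is linked to at most one receiver round: the window it
   writes is reset by the next proposal of its vertex. *)
Lemma linked_inj p k1 k2 : linked p k1 -> linked p k2 -> k1 = k2.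
Proof.
move=> [[lt1 _ _ k1_2] [_ _ same1 no1]] [[lt2 _ _ k2_2] [_ _ same2 no2]].
case: (ltngtP k1 k2) => // [lt12|lt21].
  by move: (no2 k1 lt1 lt12); rewrite -same2 same1 member_in.
by move: (no1 k2 lt2 lt21); rewrite -same1 same2 member_in.
Qed.

Definition send_link (p : nat) : option nat :=
  if [pick q : 'I_(size Qs) | recv_link q == Some p] is Some q then Some (val q) else None.

Lemma send_linkP p k : k < size Qs -> recv_link k = Some p -> send_link p = Some k.
Proof.
move=> lt_k link_k; rewrite /send_link; case: pickP => [q /eqP link_q|none].
  by congr Some; apply: linked_inj (proj1 (recv_linkP _ _) link_q) _; apply/recv_linkP.
by move: (none (Ordinal lt_k)); rewrite /= link_k eqxx.
Qed.

Lemma send_link_some p k : send_link p = Some k -> k < size Qs /\ recv_link k = Some p.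
Proof. by rewrite /send_link; case: pickP => [q /eqP link_q [<-]|]. Qed.

Lemma sel_rule_ext (sg1 sg2 : nat -> V) k :
  (forall p, p < k -> sg1 p = sg2 p) -> sel_rule sg1 k = sel_rule sg2 k.
Proof.
move=> eq_sg; rewrite /sel_rule; case Hl: (recv_link k) => [p|] //.
by rewrite eq_sg // (recv_link_lt Hl).
Qed.

Lemma sel_rule_uniq n (sg1 sg2 : nat -> V) :
  (forall k, k < n -> sg1 k = sel_rule sg1 k) -> (forall k, k < n -> sg2 k = sel_rule sg2 k) ->
  forall k, k < n -> sg1 k = sg2 k.
Proof.
move=> sg1E sg2E; elim/ltn_ind => k IH lt_kn.
by rewrite sg1E // sg2E //; apply: sel_rule_ext => p lt_pk; apply: IH => //; lia.
Qed.

Lemma sel_rule_member (sg : nat -> V) k : is_pair (Qn k) -> exists b, sel_rule sg k = member x0 (Qn k) b.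
Proof.
rewrite /sel_rule => ->; case: ifP => _; first by eexists.
by case: (recv_link k) => [p|]; [case: ifP => _|]; eexists.
Qed.

End Links.

Section Reversal.
Variables (V : finType) (d : nat) (x0 : V) (Qs : seq {set V}) (cs cs' : seq coin).
Local Notation n := (size Qs).
Local Notation Qn k := (nth set0 Qs k).
Local Notation cn k := (nth coin0 cs k).
Hypothesis sender_rev :
  forall k, k < n -> is_sender (nth coin0 cs' k) = ~~ is_sender (cn (n - k.+1)).
Hypothesis draw_m_rev :
  forall k, k < n -> draw_m (nth coin0 cs' k) = draw_m (cn (n - k.+1)).

Lemma nth_rev_set k : k < n -> nth set0 (rev Qs) k = Qn (n - k.+1).
Proof. exact: nth_rev. Qed.

Lemma linked_rev p k : k < n ->
  linked d x0 (rev Qs) cs' p k <-> linked d x0 Qs cs (n - k.+1) (n - p.+1).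
Proof.
move=> lt_kn; split.
  move=> [[lt_pk lt_kp p2 k2] [p_send k_recv same no_x]].
  have lt_pn : p < n by lia.
  rewrite !nth_rev_set // in p2 k2 same no_x.
  rewrite sender_rev // in p_send; rewrite sender_rev // negbK in k_recv.
  rewrite !draw_m_rev // in same no_x.
  split; split=> //; [lia | lia | move=> q lt_q lt_q'].
  have := no_x (n - q.+1) ltac:(lia) ltac:(lia).
  rewrite nth_rev_set; last lia.
  have -> : n - (n - q.+1).+1 = q by lia.
  by rewrite same.
move=> [[lt_kp' lt_pk' k2 p2] [k_send p_recv same no_x]].
have lt_pn : p < n by lia.
split; split; rewrite ?nth_rev_set ?sender_rev ?negbK ?draw_m_rev //; try lia.
move=> q lt_pq lt_qk; rewrite nth_rev_set ?draw_m_rev; last lia.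
by rewrite same; apply: no_x; lia.
Qed.

End Reversal.

Section Duality.
Variables (V : finType) (d : nat) (x0 : V).
Hypothesis d_gt0 : 0 < d.

Definition alg_sel (Qs : seq {set V}) (cs : seq coin) := run_sel d x0 Qs cs 1 (init_state V).

(* A former receiver selects through its new l the vertex it
   selected; a former sender linked to the receiver [q] now reads its window, so
   its l is unused and stores the l of [q], which keeps the map an involution. *)
Definition dual_coin (Qs : seq {set V}) (cs : seq coin) (k : nat) : coin :=
  let: (sr, m, l) := nth coin0 cs k in
  (~~ sr, m,
   if is_pair (nth set0 Qs k) then
     if sr then (if send_link d x0 Qs cs k is Some q then draw_l (nth coin0 cs q) else l)
     else if recv_link d x0 Qs cs k is Some _ then alg_sel Qs cs k == member x0 (nth set0 Qs k) true
     else l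
   else l).

Definition dual_coins (Qs : seq {set V}) (cs : seq coin) :=
  mkseq (fun k => dual_coin Qs cs (size Qs - k.+1)) (size Qs).

Lemma size_dual_coins Qs cs : size (dual_coins Qs cs) = size Qs.
Proof. exact: size_mkseq. Qed.

Section DualRun.
Variables (Qs : seq {set V}) (cs : seq coin).
Hypothesis Qs_ok : all (@is_proposal V) Qs.
Local Notation n := (size Qs).
Local Notation Qn k := (nth set0 Qs k).
Local Notation cn k := (nth coin0 cs k).
Local Notation cs' := (dual_coins Qs cs).
Local Notation sg := (alg_sel Qs cs).

Lemma nth_dual_coins k : k < n -> nth coin0 cs' k = dual_coin Qs cs (n - k.+1).
Proof. exact: nth_mkseq. Qed.

Lemma alg_sel_rule k : k < n -> sg k = sel_rule d x0 Qs cs sg k.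
Proof. exact: run_sel_rule. Qed.

Lemma sender_dual k : k < n -> is_sender (nth coin0 cs' k) = ~~ is_sender (cn (n - k.+1)).
Proof. by move=> lt_kn; rewrite nth_dual_coins // /dual_coin; case: (cn _) => [[? ?] ?]. Qed.

Lemma draw_m_dual k : k < n -> draw_m (nth coin0 cs' k) = draw_m (cn (n - k.+1)).
Proof. by move=> lt_kn; rewrite nth_dual_coins // /dual_coin; case: (cn _) => [[? ?] ?]. Qed.

Lemma rev_index k : k < n -> n - (n - k.+1).+1 = k.
Proof. lia. Qed.

Lemma recv_link_dual k p : k < n -> recv_link d x0 (rev Qs) cs' k = Some p ->
  recv_link d x0 Qs cs (n - p.+1) = Some (n - k.+1).
Proof.
move=> lt_kn /recv_linkP link; apply/recv_linkP.
exact: (linked_rev d x0 sender_dual draw_m_dual p lt_kn).1.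
Qed.

Lemma recv_link_dual_of k q : k < n -> q < n -> recv_link d x0 Qs cs q = Some k ->
  recv_link d x0 (rev Qs) cs' (n - k.+1) = Some (n - q.+1).
Proof.
move=> lt_kn lt_qn /recv_linkP link; apply/recv_linkP.
by apply/(linked_rev d x0 sender_dual draw_m_dual); rewrite ?rev_index //; lia.
Qed.

Lemma rev_alg_sel_rule k' : k' < n ->
  sg (n - k'.+1) = sel_rule d x0 (rev Qs) cs' (fun k => sg (n - k.+1)) k'.
Proof.
move=> lt_kn; set k := n - k'.+1.
have lt_k : k < n by rewrite /k; lia.
have sgk := alg_sel_rule lt_k.
rewrite [in RHS]/sel_rule nth_rev_set // nth_dual_coins // -/k /dual_coin.
case Ec: (cn k) => [[sr m] l] /=.
case k2: (is_pair (Qn k)); last by rewrite sgk /sel_rule k2.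
case: sr Ec => Ec /=; last first.
  case lk: (recv_link d x0 Qs cs k) => [p|]; last by rewrite sgk /sel_rule k2 Ec /= lk.
  rewrite sgk; have [b ->] := sel_rule_member d x0 cs sg k2.
  by rewrite (inj_eq (member_inj k2)); case: b.
have sgk_l : sg k = member x0 (Qn k) l by rewrite sgk /sel_rule k2 Ec.
case slk: (send_link d x0 Qs cs k) => [q|]; last first.
  case ld: (recv_link d x0 (rev Qs) cs' k') => [p'|] //.
  have lt_p'n : n - p'.+1 < n by lia.
  by rewrite /k (send_linkP lt_p'n (recv_link_dual lt_kn ld)) in slk.
have [lt_q link_q] := send_link_some slk.
have kk : n - k.+1 = k' by rewrite /k; lia.
rewrite -kk (recv_link_dual_of lt_k lt_q link_q) /= rev_index //.
have [[_ _ _ q2] [_ q_recv same _]] := (recv_linkP d x0 Qs cs q k).1 link_q.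
have sgq := alg_sel_rule lt_q.
rewrite /sel_rule q2 (negbTE q_recv) link_q in sgq.
rewrite Ec /= in same; rewrite /draw_m /= {1}same.
(* The receiver [q] selected the vertex i_m of [k] iff [k] did not. *)
case: (eqVneq (sg k) (member x0 (Qn q) (draw_m (cn q)))) => [eq_k|neq_k] in sgq *.
  by rewrite sgq (inj_eq (member_inj q2)) eq_k -same; case: (draw_m (cn q)).
rewrite sgq eqxx sgk_l; move: neq_k; rewrite -same sgk_l (inj_eq (member_inj k2)).
by case: l m {Ec same sgk sgk_l} => [] [].
Qed.

Lemma alg_sel_rev k : k < n -> alg_sel (rev Qs) cs' k = sg (n - k.+1).
Proof.
have Qs_rev_ok : all (@is_proposal V) (rev Qs) by rewrite all_rev.
move: k; apply: (sel_rule_uniq (sg1 := alg_sel (rev Qs) cs') (sg2 := fun k => sg (n - k.+1))).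
- by move=> k lt_k; apply: run_sel_rule; rewrite ?size_rev.
- exact: rev_alg_sel_rule.
Qed.

Lemma dual_coinsK : size cs = n -> dual_coins (rev Qs) cs' = cs.
Proof.
move=> size_cs; apply: (@eq_from_nth _ coin0); first by rewrite size_dual_coins size_rev.
move=> k; rewrite size_dual_coins size_rev => lt_k.
set k' := n - k.+1; have lt_k' : k' < n by rewrite /k'; lia.
have kk : n - k'.+1 = k by rewrite /k'; lia.
rewrite {1}/dual_coins nth_mkseq size_rev // -/k' /dual_coin nth_rev_set //.
rewrite nth_dual_coins // kk /dual_coin.
case Ec: (cn k) => [[sr m] l] /=; rewrite negbK.
case k2: (is_pair (Qn k)) => //.
case: sr Ec => Ec /=.
  case ld: (recv_link d x0 (rev Qs) cs' k') => [p'|].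
    have sgk := alg_sel_rule lt_k; rewrite /sel_rule k2 Ec /= in sgk.
    by rewrite alg_sel_rev // kk sgk (inj_eq (member_inj k2)); case: l {Ec sgk}.
  case slk: (send_link d x0 Qs cs k) => [q|] //.
  have [lt_q link_q] := send_link_some slk.
  by rewrite /k' (recv_link_dual_of lt_k lt_q link_q) in ld.
case lk: (recv_link d x0 Qs cs k) => [p|]; last first.
  case sld: (send_link d x0 (rev Qs) cs' k') => [q'|] //.
  have [lt_q' link_q'] := send_link_some sld; rewrite size_rev in lt_q'.
  by have := recv_link_dual lt_q' link_q'; rewrite kk lk.
have lt_pk := recv_link_lt lk.
have lt_pn : n - p.+1 < size (rev Qs) by rewrite size_rev; lia.
rewrite (send_linkP lt_pn (recv_link_dual_of (ltn_trans lt_pk lt_k) lt_k lk)).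
rewrite nth_dual_coins ?rev_index /dual_coin; [|lia|lia].
have [[_ _ p2 _] [p_send _ _ _]] := (recv_linkP d x0 Qs cs k p).1 lk.
case: (cn p) p_send => [[[] m'] l'] // _.
by rewrite p2 (send_linkP lt_k lk) Ec.
Qed.

Lemma alg_sel_seq_rev : mkseq (alg_sel (rev Qs) cs') n = rev (mkseq sg n).
Proof.
apply: (@eq_from_nth _ x0); rewrite ?size_rev ?size_mkseq // => k lt_k.
by rewrite nth_rev ?size_mkseq // !nth_mkseq ?alg_sel_rev //; lia.
Qed.

End DualRun.

Definition dual_tuple Qs (t : (size Qs).-tuple coin) : (size Qs).-tuple coin :=
  Tuple (introT eqP (size_dual_coins Qs t)).

Lemma dual_tuple_inj Qs : all (@is_proposal V) Qs -> injective (@dual_tuple Qs).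
Proof.
move=> Qs_ok t1 t2 /(congr1 (fun t : (size Qs).-tuple coin => dual_coins (rev Qs) t)) /=.
by rewrite !dual_coinsK ?size_tuple // => /val_inj.
Qed.

End Duality.

Theorem claim2 (V : finType) (d : nat) (Qs : seq {set V}) (i : V) :
  (1 <= d)%N ->
  all (fun Q : {set V} => (#|Q| == 1)%N || (#|Q| == 2)%N) Qs ->
  mu d i Qs = mu d i (rev Qs).
Proof.
move=> d_gt0 Qs_ok.
have Qs_rev_ok : all (@is_proposal V) (rev Qs) by rewrite all_rev.
rewrite /mu (mu_aux_expect i i 1 (init_state V) d_gt0 (erefl (size Qs)) Qs_ok).
rewrite (mu_aux_expect i i 1 (init_state V) d_gt0 (size_rev Qs) Qs_rev_ok).
rewrite -[RHS](expect_inj _ (dual_tuple_inj (x0 := i) d_gt0 Qs_ok)); apply: eq_expect => t.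
by rewrite /run_matches /= (alg_sel_seq_rev i d_gt0 t Qs_ok) map_rev greedy_matches_rev.
Qed.
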